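(* Let $S=\{0,1,a_0,a_1,a_2\}$ and consider the CA local rule $f$ of radius $1$ for undirected graphs (single vertex label, single edge label, edge relation symmetric) such that a vertex in state $i\in\{0,1\}$ takes state $1-i$, and a vertex in state $a_i$ takes state $0$ if it has a neighbor in a state from $\{0,1\}$ and state $a_{(i+1)\bmod 3}$ otherwise. Then for every nonempty undirected graph $G=(V,E)$ (finite or infinite), $G$ is connected if and only if $F_{G,f}$ has no configuration $c\in S^V$ of minimal period $6$, i.e. no $c$ with $F_{G,f}^6(c)=c$ and $F_{G,f}^j(c)\neq c$ for $1\le j\le 5$.
   Context: An undirected graph $G=(V,E)$ is viewed as a labeled graph with one vertex label and one edge label whose edge relation is symmetric. A CA local rule of radius $1$ determines the next state of a vertex from its current state and the set of states present among its neighbors; its global map $F_{G,f}:S^V\to S^V$ applies this rule simultaneously at every vertex. *)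

From Stdlib Require Import Relations ClassicalEpsilon.

(* A graph on an arbitrary (possibly infinite) vertex type V is given by an
   edge relation E : V -> V -> Prop; "undirected" = E symmetric. *)
Definition symmetric_graph {V : Type} (E : V -> V -> Prop) : Prop :=
  forall u v, E u v -> E v u.

Definition connected {V : Type} (E : V -> V -> Prop) : Prop :=
  forall u v : V, clos_refl_trans V E u v.

Inductive state : Type := Z0 | Z1 | A0 | A1 | A2.

(* Radius-1 local rule: takes the current state and the set of states
   present among the neighbours. *)
Definition local_rule (s : state) (N : state -> Prop) : state :=
  match s with
  | Z0 => Z1
  | Z1 => Z0
  | A0 => if excluded_middle_informative (N Z0 \/ N Z1) then Z0 else A1
  | A1 => if excluded_middle_informative (N Z0 \/ N Z1) then Z0 else A2
  | A2 => if excluded_middle_informative (N Z0 \/ N Z1) then Z0 else A0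
  end.

Definition neighbor_states {V : Type} (E : V -> V -> Prop) (c : V -> state)
  (v : V) : state -> Prop :=
  fun s => exists u, E v u /\ c u = s.

Definition global_map {V : Type} (E : V -> V -> Prop) (c : V -> state) :
  V -> state :=
  fun v => local_rule (c v) (neighbor_states E c v).

Definition has_min_period {V : Type} (E : V -> V -> Prop) (p : nat)
  (c : V -> state) : Prop :=
  Nat.iter p (global_map E) c = c /\
  forall j, 1 <= j < p -> Nat.iter j (global_map E) c <> c.

From Stdlib Require Import Relations ClassicalEpsilon Classical FunctionalExtensionality Arith Lia.

(* The binary states 0, 1 are never left again and they spread to every
   neighbour in one step; hence the binary part of a configuration only
   grows, and on a configuration whose binary part is a union of connected
   components the global map acts pointwise as the cyclic successor, of
   period 2 on {0,1} and of period 3 on {a_0,a_1,a_2}.  A periodic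
   configuration has a binary part that cannot grow, so it is such a union;
   on a connected graph it is therefore all or nothing and the period divides
   2 or 3.  Conversely, binary states on one component and [a_i]'s elsewhere
   give minimal period lcm(2,3) = 6. *)

Definition is_binary (s : state) : Prop := s = Z0 \/ s = Z1.

Definition next_state (s : state) : state :=
  match s with Z0 => Z1 | Z1 => Z0 | A0 => A1 | A1 => A2 | A2 => A0 end.

Lemma is_binary_next_state s : is_binary (next_state s) <-> is_binary s.
Proof. unfold is_binary; destruct s; simpl; intuition discriminate. Qed.

Lemma iter6_next_state s : Nat.iter 6 next_state s = s.
Proof. destruct s; reflexivity. Qed.

Lemma iter2_next_state_binary s : is_binary s -> Nat.iter 2 next_state s = s.
Proof. intros [-> | ->]; reflexivity. Qed.

Lemma iter3_next_state_nonbinary s : ~ is_binary s -> Nat.iter 3 next_state s = s.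
Proof. unfold is_binary; destruct s; intros Hs; tauto || reflexivity. Qed.

Section GlobalMap.

Variables (V : Type) (E : V -> V -> Prop).

Lemma global_map_binary c x :
  is_binary (c x) -> global_map E c x = next_state (c x).
Proof. unfold global_map, local_rule; intros [-> | ->]; reflexivity. Qed.

Lemma global_map_no_binary_neighbor c x :
  (forall w, E x w -> ~ is_binary (c w)) -> global_map E c x = next_state (c x).
Proof.
  intros Hnb; unfold global_map, local_rule.
  destruct (c x); try reflexivity;
    destruct excluded_middle_informative as [[[w [Hw Hcw]] | [w [Hw Hcw]]] | _];
    try reflexivity; exfalso; apply (Hnb w Hw); red; auto.
Qed.

Lemma is_binary_global_map_neighbor c x w :
  E x w -> is_binary (c w) -> is_binary (global_map E c x).
Proof.
  intros Hxw Hw; unfold global_map, local_rule, is_binary in *.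
  destruct (c x); auto;
    destruct excluded_middle_informative as [_ | Hn]; auto;
    exfalso; apply Hn; (destruct Hw; [left | right]); exists w; auto.
Qed.

Lemma is_binary_iter_global_map n c x :
  is_binary (c x) -> is_binary (Nat.iter n (global_map E) c x).
Proof.
  induction n as [| n IH]; simpl; intros Hx; auto.
  rewrite global_map_binary by auto; now apply is_binary_next_state, IH.
Qed.

(* The binary part of [c] is closed under taking neighbours, i.e. it is a
   union of connected components when [E] is symmetric. *)
Definition binary_closed (c : V -> state) : Prop :=
  forall x w, E x w -> is_binary (c w) -> is_binary (c x).

Lemma global_map_binary_closed c :
  binary_closed c -> global_map E c = fun x => next_state (c x).
Proof.
  intros Hc; extensionality x.
  destruct (classic (is_binary (c x))) as [Hx | Hx].
  - now apply global_map_binary.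
  - apply global_map_no_binary_neighbor; intros w Hw Hcw; exact (Hx (Hc x w Hw Hcw)).
Qed.

Lemma binary_closed_next_state c :
  binary_closed c -> binary_closed (fun x => next_state (c x)).
Proof.
  intros Hc x w Hw; rewrite !is_binary_next_state; exact (Hc x w Hw).
Qed.

Lemma iter_global_map_binary_closed n c :
  binary_closed c ->
  Nat.iter n (global_map E) c = fun x => Nat.iter n next_state (c x).
Proof.
  revert c; induction n as [| n IH]; intros c Hc; [reflexivity |].
  rewrite Nat.iter_succ_r, global_map_binary_closed, IH by
    (auto using binary_closed_next_state).
  extensionality x; now rewrite <- Nat.iter_succ_r.
Qed.

Lemma binary_closed_of_periodic n c :
  Nat.iter (S n) (global_map E) c = c -> binary_closed c.
Proof.
  intros Hper x w Hw Hcw.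
  rewrite <- Hper, Nat.iter_succ_r.
  apply is_binary_iter_global_map, (is_binary_global_map_neighbor _ _ w); auto.
Qed.

Lemma binary_closed_connected c :
  connected E -> binary_closed c ->
  (forall x, is_binary (c x)) \/ (forall x, ~ is_binary (c x)).
Proof.
  intros Hconn Hc.
  destruct (classic (exists y, is_binary (c y))) as [[y Hy] | Hnone].
  - left; intros x; induction (Hconn x y); eauto.
  - right; intros x Hx; eauto.
Qed.

Lemma periodic_connected_period_2_or_3 n c :
  connected E -> Nat.iter (S n) (global_map E) c = c ->
  Nat.iter 2 (global_map E) c = c \/ Nat.iter 3 (global_map E) c = c.
Proof.
  intros Hconn Hper.
  pose proof (binary_closed_of_periodic n c Hper) as Hc.
  rewrite !iter_global_map_binary_closed by exact Hc.
  destruct (binary_closed_connected c Hconn Hc) as [Hall | Hnone];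
    [left | right]; extensionality x;
    auto using iter2_next_state_binary, iter3_next_state_nonbinary.
Qed.

Definition component_config (u : V) (x : V) : state :=
  if excluded_middle_informative (clos_refl_trans V E u x) then Z0 else A0.

Lemma binary_closed_component_config u :
  symmetric_graph E -> binary_closed (component_config u).
Proof.
  intros Hsym x w Hw; unfold component_config.
  destruct (excluded_middle_informative (clos_refl_trans V E u w)) as [Hu | _];
    [| intros [H | H]; discriminate].
  destruct excluded_middle_informative as [_ | Hn]; [intros; red; auto |].
  exfalso; apply Hn; eapply rt_trans; [exact Hu | apply rt_step; auto].
Qed.

Lemma has_min_period_component_config u v :
  symmetric_graph E -> ~ clos_refl_trans V E u v ->
  has_min_period E 6 (component_config u).
Proof.
  intros Hsym Huv.
  assert (Hiter : forall n, Nat.iter n (global_map E) (component_config u)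
                           = fun x => Nat.iter n next_state (component_config u x))
    by (intros n; apply iter_global_map_binary_closed,
          binary_closed_component_config, Hsym).
  split.
  - rewrite Hiter; extensionality x; apply iter6_next_state.
  - intros j Hj Hper; rewrite Hiter in Hper.
    assert (Hu := f_equal (fun c => c u) Hper).
    assert (Hv := f_equal (fun c => c v) Hper).
    unfold component_config in Hu, Hv; simpl in Hu, Hv.
    destruct excluded_middle_informative as [_ | Hnu] in Hu;
      [| exact (Hnu (rt_refl _ _ u))].
    destruct excluded_middle_informative as [Hu' | _] in Hv; [contradiction |].
    (* [j] must be even (at [u]) and a multiple of 3 (at [v]) *)
    destruct j as [| [| [| [| [| [| j]]]]]]; try lia; discriminate.
Qed.

End GlobalMap.

Theorem mainTheorem13 (V : Type) (E : V -> V -> Prop) :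
  symmetric_graph E -> inhabited V ->
  (connected E <-> ~ exists c : V -> state, has_min_period E 6 c).
Proof.
  intros Hsym _; split.
  - intros Hconn [c [Hper Hmin]].
    destruct (periodic_connected_period_2_or_3 _ _ 5 c Hconn Hper) as [H2 | H3].
    + apply (Hmin 2); [lia | exact H2].
    + apply (Hmin 3); [lia | exact H3].
  - intros Hnone; apply NNPP; intros Hdisc.
    apply not_all_ex_not in Hdisc as [u Hu].
    apply not_all_ex_not in Hu as [v Huv].
    apply Hnone; exists (component_config _ E u).
    exact (has_min_period_component_config _ _ u v Hsym Huv).
Qed.
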